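(* For either choice $\zeta\in\{q,-q^3\}$, the function $\bar{\mathcal{F}}(v_1,v_2\mid\lambda_1,\dots,\lambda_{L-1})=\langle\bar0|\mathcal{B}(v_2)\mathcal{B}(v_1)\mathcal{E}(\lambda_{L-1})\cdots\mathcal{E}(\lambda_1)|0\rangle$ vanishes whenever $y_2=e^{2v_2}=e^{2\mu_j}$ for some $1\le j\le L$.
   Context: Let $q\in\mathbb{C}\setminus\{0\}$ (with a fixed choice of $q^{1/2}$) and $\zeta\in\{q,-q^3\}$ ($\zeta=q$: Fateev–Zamolodchikov model; $\zeta=-q^3$: Izergin–Korepin model). For $\lambda\in\mathbb{C}$ put $x=e^{2\lambda}$ and define $a(\lambda)=(x-\zeta)(x-q^2)$, $b(\lambda)=q(x-1)(x-\zeta)$, $c(\lambda)=(1-q^2)(x-\zeta)$, $\bar c(\lambda)=x(1-q^2)(x-\zeta)$, and for $\alpha,\beta\in\{1,2,3\}$, with $\beta'=4-\beta$: $d_{\alpha,\beta}(\lambda)=q(x-1)(x-\zeta)+x(q^2-1)(\zeta-1)$ if $\alpha=\beta=2$; $d_{\alpha,\beta}(\lambda)=(x-1)[(x-\zeta)+x(q^2-1)]$ if $\alpha=\beta\neq 2$; $d_{\alpha,\beta}(\lambda)=(q^2-1)[\zeta(x-1)q^{(\alpha-\beta)/2}-\delta_{\alpha,\beta'}(x-\zeta)]$ if $\alpha<\beta$; $d_{\alpha,\beta}(\lambda)=x(q^2-1)[(x-1)q^{(\alpha-\beta)/2}-\delta_{\alpha,\beta'}(x-\zeta)]$ if $\alpha>\beta$.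 Let $e_1,e_2,e_3$ be the standard basis of $\mathbb{C}^3$ and $E_{\alpha,\beta}$ the unit matrices. Define $\mathcal{R}(\lambda)\in\mathrm{End}(\mathbb{C}^3\otimes\mathbb{C}^3)$ as the $9\times 9$ matrix in the ordered basis $e_1\otimes e_1,e_1\otimes e_2,e_1\otimes e_3,e_2\otimes e_1,e_2\otimes e_2,e_2\otimes e_3,e_3\otimes e_1,e_3\otimes e_2,e_3\otimes e_3$ (indices $1,\dots,9$) whose only nonzero entries (row, column) are: $(1,1)=a$; $(2,2)=b$, $(2,4)=c$; $(3,3)=d_{1,1}$, $(3,5)=d_{1,2}$, $(3,7)=d_{1,3}$; $(4,2)=\bar c$, $(4,4)=b$; $(5,3)=d_{2,1}$, $(5,5)=d_{2,2}$, $(5,7)=d_{2,3}$; $(6,6)=b$, $(6,8)=c$; $(7,3)=d_{3,1}$, $(7,5)=d_{3,2}$, $(7,7)=d_{3,3}$; $(8,6)=\bar c$, $(8,8)=b$; $(9,9)=a$ (all evaluated at $\lambda$). Fix $L\ge1$ and inhomogeneities $\mu_1,\dots,\mu_L\in\mathbb{C}$. With $V_a=V_1=\dots=V_L=\mathbb{C}^3$, let $\mathcal{T}(\lambda)=\mathcal{R}_{a1}(\lambda-\mu_1)\cdots\mathcal{R}_{aL}(\lambda-\mu_L)$, where $\mathcal{R}_{aj}$ acts as $\mathcal{R}$ on $V_a\otimes V_j$. Write $\mathcal{T}(\lambda)=\sum_{\alpha,\beta}E_{\alpha,\beta}\otimes\mathcal{T}_\alpha^\beta(\lambda)$ and set $\mathcal{B}(\lambda)=\mathcal{T}_1^2(\lambda)$,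 $\mathcal{E}(\lambda)=\mathcal{T}_1^3(\lambda)$, operators on $V_1\otimes\cdots\otimes V_L$. Let $|0\rangle=e_1^{\otimes L}$ and let $\langle\bar0|$ be the dual vector of $e_3^{\otimes L}$. *)

From HB Require Import structures.
From mathcomp Require Import all_boot all_order all_algebra.
From mathcomp Require Import reals.
From mathcomp.analysis Require Import sequences exp trigo.
From mathcomp Require Import complex mxtens.
Set Implicit Arguments. Unset Strict Implicit. Unset Printing Implicit Defensive.
Import Order.TTheory GRing.Theory Num.Theory.
Local Open Scope ring_scope.

Section FZIK.
Variable R : realType.
Local Notation C := (R[i]).

Definition cexp (z : C) : C :=
  let: Complex a b := z in Complex (expR a * cos b) (expR a * sin b).

(* Parameters: s is the fixed square root q^{1/2}, so q = s^2; zeta is zeta. *)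
Variables (s zeta : C).
Local Notation q := (s ^+ 2).

(* q^{(alpha-beta)/2} = s^(alpha-beta) (integer exponent) *)
Definition qhalf (a b : nat) : C := s ^ (a%:Z - b%:Z).

Section Weights.
Variable x : C.
Definition wa : C := (x - zeta) * (x - q ^+ 2).
Definition wb : C := q * (x - 1) * (x - zeta).
Definition wc : C := (1 - q ^+ 2) * (x - zeta).
Definition wcbar : C := x * (1 - q ^+ 2) * (x - zeta).
(* d_{alpha,beta}, alpha, beta in {1,2,3}; beta' = 4 - beta *)
Definition wd (a b : nat) : C :=
  if (a == 2%N) && (b == 2%N) then
    q * (x - 1) * (x - zeta) + x * (q ^+ 2 - 1) * (zeta - 1)
  else if a == b then (x - 1) * ((x - zeta) + x * (q ^+ 2 - 1))
  else if (a < b)%N then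
    (q ^+ 2 - 1) * (zeta * (x - 1) * qhalf a b
                    - (if a == (4 - b)%N then 1 else 0) * (x - zeta))
  else
    x * (q ^+ 2 - 1) * ((x - 1) * qhalf a b
                    - (if a == (4 - b)%N then 1 else 0) * (x - zeta)).

(* entry (r, c) of the 9x9 matrix, rows/columns numbered 1..9 *)
Definition Rentry (r c : nat) : C :=
  match r, c with
  | 1, 1 => wa
  | 2, 2 => wb | 2, 4 => wc
  | 3, 3 => wd 1 1 | 3, 5 => wd 1 2 | 3, 7 => wd 1 3
  | 4, 2 => wcbar | 4, 4 => wb
  | 5, 3 => wd 2 1 | 5, 5 => wd 2 2 | 5, 7 => wd 2 3
  | 6, 6 => wb | 6, 8 => wc
  | 7, 3 => wd 3 1 | 7, 5 => wd 3 2 | 7, 7 => wd 3 3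
  | 8, 6 => wcbar | 8, 8 => wb
  | 9, 9 => wa
  | _, _ => 0%R
  end.
End Weights.

(* R(lambda) as a 9x9 matrix on C^3 (x) C^3, basis e_a (x) e_b has index
   3(a-1) + (b-1) (0-based), x = e^{2 lambda}. *)
Definition Rmat (lam : C) : 'M[C]_(3 * 3) :=
  \matrix_(i, j) Rentry (cexp (2 * lam)) i.+1 j.+1.

(* R_{aj} = sum_{alpha,beta} E_{alpha beta} (x) Rblock alpha beta, where
   Rblock alpha beta acts on V_j. *)
Definition Rblock (lam : C) (al be : 'I_3) : 'M[C]_3 :=
  \matrix_(i, j) Rmat lam (mxtens_index (al, i)) (mxtens_index (be, j)).

Fixpoint qdim (k : nat) : nat := if k is k'.+1 then (qdim k' * 3)%N else 1%N.

(* quantum-space entries T_alpha^beta(lambda) of the monodromy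
   R_{a1}(lambda - mu_1) ... R_{ak}(lambda - mu_k), mu_j = mu j (1-based). *)
Fixpoint Tmon (mu : nat -> C) (k : nat) (lam : C) : 'I_3 -> 'I_3 -> 'M[C]_(qdim k) :=
  match k with
  | 0 => fun al be => (al == be)%:R%:M
  | k'.+1 => fun al be =>
      \sum_(g < 3) (Tmon mu k' lam al g *t Rblock (lam - mu k'.+1) g be)
  end.

(* indices 1,2,3 of the paper are the ordinals 0,1,2 *)
Definition i1 : 'I_3 := ord0.
Definition i2 : 'I_3 := inord 1.
Definition i3 : 'I_3 := inord 2.

Definition Bop mu L lam := Tmon mu L lam i1 i2.
Definition Eop mu L lam := Tmon mu L lam i1 i3.

Definition evec (a : 'I_3) : 'cV[C]_3 := \col_i (i == a)%:R.

Fixpoint vac (k : nat) : 'cV[C]_(qdim k) :=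
  if k is k'.+1 then vac k' *t evec i1 else 1%:M.
Fixpoint bvac (k : nat) : 'cV[C]_(qdim k) :=
  if k is k'.+1 then bvac k' *t evec i3 else 1%:M.

Fixpoint Eprod mu L (lam : nat -> C) (n : nat) : 'M[C]_(qdim L) :=
  if n is n'.+1 then Eop mu L (lam n) *m Eprod mu L lam n' else 1%:M.

Definition Fbar (mu : nat -> C) (L : nat) (v1 v2 : C) (lam : nat -> C) : C :=
  ((bvac L)^T *m Bop mu L v2 *m Bop mu L v1 *m Eprod mu L lam L.-1 *m vac L)
    ord0 ord0.

End FZIK.

From HB Require Import structures.
From mathcomp Require Import all_boot all_order all_algebra.
From mathcomp Require Import reals.
From mathcomp.analysis Require Import sequences exp trigo.
From mathcomp Require Import complex mxtens.
From mathcomp Require Import ring zify.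
Set Implicit Arguments. Unset Strict Implicit. Unset Printing Implicit Defensive.
Import Order.TTheory GRing.Theory Num.Theory.
Local Open Scope ring_scope.

(* Write <3| for the dual of e_3.  Row 9 of R(lambda) is a e_9^T (charge
   conservation), and at x = 1 rows 3, 6, 9 vanish on columns 1..6, because
   d_{1,1}, d_{1,2} and b carry the factor x - 1.  In block form,
   <3| R_g^b = 0 for b <> 3 when g = 3, and for every g when x = 1.  Hence,
   if e^{2 lambda} = e^{2 mu_j}, then <3...3| T_a^b(lambda) = 0 for b <> 3 by
   induction on the number k >= j of sites: site j kills every term of
   T_a^b = sum_g T_a^g (x) R_g^b, and a later site kills the term g = 3 while
   the others vanish by induction.  As B = T_1^2 stands leftmost in Fbar,
   Fbar vanishes. *)

Section ComplexExp.
Variable R : realType.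

Lemma cexpD (z w : R[i]) : cexp (z + w) = cexp z * cexp w.
Proof.
case: z => a b; case: w => c d /=.
rewrite expRD cosD sinD -[RHS]/(mulc _ _) /=; congr (Complex _ _); ring.
Qed.

Lemma cexp_neq0 (z : R[i]) : cexp z != 0.
Proof.
case: z => a b /=; apply/negP => /eqP [].
have ea : expR a != 0 by rewrite gt_eqF ?expR_gt0.
move/eqP; rewrite mulf_eq0 (negbTE ea) /= => /eqP cb.
move/eqP; rewrite mulf_eq0 (negbTE ea) /= => /eqP sb.
by have /eqP := cos2Dsin2 b; rewrite cb sb expr0n add0r eq_sym oner_eq0.
Qed.

Lemma cexp_subr_eq1 (z w : R[i]) : cexp z = cexp w -> cexp (z - w) = 1.
Proof.
move=> ezw; apply: (mulIf (cexp_neq0 w)).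
by rewrite -cexpD subrK ezw mul1r.
Qed.

End ComplexExp.

Section Monodromy.
Variables (R : realType) (s zeta : R[i]).

Lemma i3E : (i3 : nat) = 2%N. Proof. by rewrite /i3 inordK. Qed.

Lemma ltn_neq_i3 (b : 'I_3) : b != i3 -> (b < 2)%N.
Proof. by rewrite -val_eqE /= i3E; case: b => [[|[|[|]]]]. Qed.

Lemma trmx_evec_mul (a : 'I_3) (M : 'M[R[i]]_3) : (evec R a)^T *m M = row a M.
Proof.
rewrite rowE; congr (_ *m _); apply/matrixP => r k.
by rewrite !mxE [r]ord1 eqxx.
Qed.

Lemma RblockE (lam : R[i]) (a b i k : 'I_3) :
  Rblock s zeta lam a b i k =
    Rentry s zeta (cexp (2 * lam)) (a * 3 + i).+1 (b * 3 + k).+1.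
Proof. by rewrite !mxE. Qed.

Lemma Rentry9_offdiag (x : R[i]) (c : nat) :
  c != 9%N -> Rentry s zeta x 9 c = 0.
Proof. by do 9 (case: c => [|c] //); case: c. Qed.

Lemma Rentry1_rows_e3 (r c : nat) : r \in [:: 3; 6; 9]%N -> (c <= 6)%N ->
  Rentry s zeta 1 r c = 0.
Proof.
rewrite !inE => /or3P[] /eqP ->; case: c => [|[|[|[|[|[|[|c]]]]]]] //=;
by rewrite /wd /wb /= => _; ring.
Qed.

Lemma row_i3_Rblock_i3 (lam : R[i]) (b : 'I_3) : b != i3 ->
  row i3 (Rblock s zeta lam i3 b) = 0.
Proof.
move=> /ltn_neq_i3 b2; apply/rowP => k; rewrite mxE RblockE mxE i3E.
by apply: Rentry9_offdiag; have := ltn_ord k; lia.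
Qed.

Lemma row_i3_Rblock_at1 (lam : R[i]) (a b : 'I_3) : cexp (2 * lam) = 1 ->
  b != i3 -> row i3 (Rblock s zeta lam a b) = 0.
Proof.
move=> x1 /ltn_neq_i3 b2; apply/rowP => k; rewrite mxE RblockE mxE x1 i3E.
apply: Rentry1_rows_e3; last by have := ltn_ord k; lia.
by case: a => [[|[|[|]]]].
Qed.

Lemma bvac_Tmon_eq0 (mu : nat -> R[i]) (lam : R[i]) (j k : nat) (a b : 'I_3) :
  (0 < j <= k)%N -> cexp (2 * (lam - mu j)) = 1 -> b != i3 ->
  (bvac R k)^T *m Tmon s zeta mu k lam a b = 0.
Proof.
move=> /andP[j0 jk] xj1; elim: k jk a b => [|k IH] jk a b b3.
  by rewrite leqNgt j0 in jk.
rewrite /= (trmx_tens (bvac R k) (evec R i3)) mulmx_sumr big1 // => g _.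
rewrite (tensmx_mul (bvac R k)^T (evec R i3)^T) trmx_evec_mul.
move: jk; rewrite leq_eqVlt => /predU1P[<- | ].
  by rewrite row_i3_Rblock_at1 ?tensmx0.
rewrite ltnS => jk; have [-> | g3] := eqVneq g i3.
  by rewrite row_i3_Rblock_i3 ?tensmx0.
by rewrite IH ?tens0mx.
Qed.

End Monodromy.

Theorem lemma2p5 (R : realType) (s zeta : R[i]) (L : nat)
    (mu : nat -> R[i]) (v1 v2 : R[i]) (lam : nat -> R[i]) (j : nat) :
  s != 0 ->
  zeta = s ^+ 2 \/ zeta = - (s ^+ 2) ^+ 3 ->
  (1 <= L)%N ->
  (1 <= j <= L)%N ->
  cexp (2 * v2) = cexp (2 * mu j) ->
  Fbar s zeta mu L v1 v2 lam = 0.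
Proof.
move=> _ _ _ jL v2_mu.
have xj1 : cexp (2 * (v2 - mu j)) = 1 by rewrite mulrBr; apply: cexp_subr_eq1.
have i2_neq_i3 : i2 != i3 by rewrite -val_eqE /= i3E /i2 inordK.
by rewrite /Fbar /Bop (bvac_Tmon_eq0 s zeta i1 jL xj1 i2_neq_i3) !mul0mx mxE.
Qed.
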